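(* Let an FCA with state set $S$, neighborhood $m=l+1+r$, local rule $f$ and boundary type $b\in\{\text{null},\text{periodic}\}$ be given, and let $G$ be its reversibility graph. If $N$ is a negative vertex of $G$ with value $k\ge1$ and some circuit of length $1$ (a loop) passes through $N$, then the FCA is not $n$-cell-reversible for every $n\ge k$.
   Context: A one-dimensional finite cellular automaton (FCA) is given by a state set $S=\{0,1,\dots,s-1\}$, integers $l,r\ge 0$ with neighborhood size $m=l+1+r\ge 2$, a local rule $f:S^m\to S$, and a boundary type $b\in\{\text{null},\text{periodic}\}$. For $n\ge 1$ the global map $\tau_n:S^n\to S^n$ sends $(x_0,\dots,x_{n-1})$ to $(y_0,\dots,y_{n-1})$ with $y_i=f(x_{i-l},\dots,x_{i+r})$, where for the null boundary $x_j=0$ whenever $j<0$ or $j>n-1$, and for the periodic boundary indices are taken modulo $n$. The FCA is $n$-cell-reversible if $\tau_n$ is a bijection (equivalently, since $S^n$ is finite, surjective). Reversibility graph (RG). Null boundary: vertices are subsets of $S^{m-1}$; the root is $N_0=\{(a_1,\dots,a_{m-1})\in S^{m-1}: a_1=\dots=a_l=0\}$; the acceptance set is $R=\{(a_1,\dots,a_{m-1})\in S^{m-1}: a_{m-r}=\dots=a_{m-1}=0\}$ (so $R=S^{m-1}$ if $r=0$); for a subset $N$ and $c\in S$, $\delta(N,c)=\{(a_1,\dots,a_{m-1})\in S^{m-1}:\exists a_0\in S,\ (a_0,\dots,a_{m-2})\in N,\ f(a_0,a_1,\dots,a_{m-1})=c\}$. Periodic boundary: vertices are subsets of $S^{m-1}\times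 S^{m-1}$; the root and the acceptance set are $N_0=R=\{(a,a):a\in S^{m-1}\}$; $\delta(N,c)=\{((a_1,\dots,a_{m-1}),(b_1,\dots,b_{m-1})):\exists b_0\in S,\ ((a_1,\dots,a_{m-1}),(b_0,\dots,b_{m-2}))\in N,\ f(b_0,\dots,b_{m-1})=c\}$. In both cases the RG is the directed graph whose vertex set consists of all subsets obtainable from $N_0$ by repeatedly applying $\delta$ (including $N_0$; equal subsets are the same vertex; the empty set may occur), with, for each vertex $N$ and each $c\in S$, an edge labelled $c$ from $N$ to $\delta(N,c)$. The value of a vertex $N$ is the length of a shortest directed path from $N_0$ to $N$. A vertex $N$ is negative if $N\cap R=\emptyset$. A circuit is an elementary directed cycle of the RG (a closed directed path with no repeated vertex other than its start = end; a loop is a circuit of length $1$); its length is its number of edges, and it passes through $N$ if $N$ is one of its vertices. *)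

From mathcomp Require Import all_boot.
Unset Implicit Arguments. Unset Strict Implicit. Unset Printing Implicit Defensive.

Inductive bnd := Null | Periodic.

Section FCA.
(* State set S = {0,...,s}, i.e. |S| = s+1 >= 1 (state 0 exists). *)
Variable s : nat.
Local Notation S := 'I_s.+1.
Local Notation zero := (@ord0 s).
(* neighborhood l + 1 + r; points of S^(m-1) are (l+r)-tuples. *)
Variables l r : nat.
Variable f : (l + r).+1.-tuple S -> S.

(* x_{i-l+j} (j-th argument of the local rule at cell i) *)
Definition cell (b : bnd) (n : nat) (x : n.-tuple S) (i j : nat) : S :=
  match b with
  | Null => let k := i + j in
            if (l <= k) && (k - l < n) then nth zero x (k - l) else zero
  | Periodic => nth zero x ((i + j + n * l - l) %% n)
  end.

Definition tau (b : bnd) (n : nat) (x : n.-tuple S) : n.-tuple S :=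
  [tuple f [tuple cell b n x i j | j < (l + r).+1] | i < n].

Definition reversible (b : bnd) (n : nat) : Prop := bijective (tau b n).

Definition pt (b : bnd) : finType :=
  match b with
  | Null => ((l + r).-tuple S : finType)
  | Periodic => (((l + r).-tuple S * (l + r).-tuple S)%type : finType)
  end.

(* (a0, a_1, ..., a_{m-2}) and (a0, a_1, ..., a_{m-1}) from a0 and a = (a_1..a_{m-1}) *)
Definition shiftin (a0 : S) (a : (l + r).-tuple S) : (l + r).-tuple S :=
  [tuple nth zero (a0 :: a) i | i < l + r].
Definition full (a0 : S) (a : (l + r).-tuple S) : (l + r).+1.-tuple S :=
  [tuple nth zero (a0 :: a) i | i < (l + r).+1].

Definition deltaN (N : {set (l + r).-tuple S}) (c : S) : {set (l + r).-tuple S} :=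
  [set a | [exists a0 : S, (shiftin a0 a \in N) && (f (full a0 a) == c)]].

Definition deltaP (N : {set (l + r).-tuple S * (l + r).-tuple S}) (c : S)
  : {set (l + r).-tuple S * (l + r).-tuple S} :=
  [set p | [exists b0 : S, ((p.1, shiftin b0 p.2) \in N) && (f (full b0 p.2) == c)]].

Definition delta (b : bnd) : {set pt b} -> S -> {set pt b} :=
  match b return {set pt b} -> S -> {set pt b} with
  | Null => deltaN
  | Periodic => deltaP
  end.

Definition root (b : bnd) : {set pt b} :=
  match b return {set pt b} with
  | Null => [set a : (l + r).-tuple S | [forall i : 'I_(l + r), (i < l) ==> (tnth a i == zero)]]
  | Periodic => [set p : (l + r).-tuple S * (l + r).-tuple S | p.1 == p.2]
  end.

Definition accept (b : bnd) : {set pt b} :=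
  match b return {set pt b} with
  | Null => [set a : (l + r).-tuple S | [forall i : 'I_(l + r), (l <= i) ==> (tnth a i == zero)]]
  | Periodic => [set p : (l + r).-tuple S * (l + r).-tuple S | p.1 == p.2]
  end.

Definition run (b : bnd) (w : seq S) : {set pt b} := foldl (delta b) (root b) w.

Definition is_vertex (b : bnd) (N : {set pt b}) : Prop := exists w, run b w = N.

(* value of N = length of a shortest directed path from N0 to N *)
Definition value_is (b : bnd) (N : {set pt b}) (k : nat) : Prop :=
  (exists w, size w = k /\ run b w = N) /\ (forall w, run b w = N -> k <= size w).

Definition negative (b : bnd) (N : {set pt b}) : Prop := N :&: accept b = set0.

Definition has_loop (b : bnd) (N : {set pt b}) : Prop := exists c : S, delta b N c = N.

End FCA.

From Pilot Require Import Defs.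
From mathcomp Require Import all_boot zify.

(* Reading tau_n x from the root keeps track of the configuration x: after i
   letters the current vertex contains the window of x seen by cell i (for the
   periodic boundary, paired with the window of cell 0). After all n letters
   this point lies in the acceptance set, so every vertex reached by an image
   of tau_n is non-negative. On the other hand a shortest word reaching N,
   padded to length n with the label of the loop at N, reaches the negative
   vertex N; hence it is not an image of tau_n, and tau_n is not surjective. *)

Section ReversibilityGraph.
Variables (s l r : nat) (f : (l + r).+1.-tuple 'I_s.+1 -> 'I_s.+1).
Local Notation S := 'I_s.+1.
Local Notation cell := (cell s l).
Local Notation tau := (tau s l r f).
Local Notation run := (run s l r f).
Local Notation delta := (delta s l r f).

Definition window b n (x : n.-tuple S) i : (l + r).-tuple S :=
  [tuple cell b n x i j | j < l + r].

Lemma cellS b n (x : n.-tuple S) i j : cell b n x i.+1 j = cell b n x i j.+1.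
Proof. by case: b => /=; rewrite addSn addnS. Qed.

Lemma nth_cons_window b n (x : n.-tuple S) i j : j <= l + r ->
  nth ord0 (cell b n x i 0 :: window b n x i.+1) j = cell b n x i j.
Proof.
case: j => [//|j] /= lt_j.
by rewrite -[j]/(nat_of_ord (Ordinal lt_j)) nth_mktuple cellS.
Qed.

Lemma shiftin_window b n (x : n.-tuple S) i :
  shiftin s l r (cell b n x i 0) (window b n x i.+1) = window b n x i.
Proof.
by apply: eq_from_tnth => j; rewrite !tnth_mktuple nth_cons_window 1?ltnW.
Qed.

Lemma full_window b n (x : n.-tuple S) i :
  full s l r (cell b n x i 0) (window b n x i.+1) =
  [tuple cell b n x i j | j < (l + r).+1].
Proof.
by apply: eq_from_tnth => j; rewrite !tnth_mktuple nth_cons_window // -ltnS.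
Qed.

Lemma run_rcons b w c : run b (rcons w c) = delta b (run b w) c.
Proof. exact: foldl_rcons. Qed.

Lemma run_cat_loop b w c m :
  delta b (run b w) c = run b w -> run b (w ++ nseq m c) = run b w.
Proof.
move=> loop; rewrite /Defs.run foldl_cat -/(run b w).
by elim: m => //= m IH; rewrite loop.
Qed.

Lemma take_tauS b n (x : n.-tuple S) i : i < n ->
  take i.+1 (tau b n x) =
  rcons (take i (tau b n x)) (f [tuple cell b n x i j | j < (l + r).+1]).
Proof.
move=> lt_in; rewrite (take_nth ord0) ?size_tuple //.
by rewrite -[i]/(nat_of_ord (Ordinal lt_in)) nth_mktuple.
Qed.

Lemma window_in_run_null n (x : n.-tuple S) i : i <= n ->
  window Null n x i \in run Null (take i (tau Null n x)).
Proof.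
elim: i => [_|i IH lt_in].
  rewrite take0 /Defs.run /= inE; apply/forallP => j; apply/implyP => lt_jl.
  by rewrite tnth_mktuple /= add0n leqNgt lt_jl.
rewrite take_tauS // run_rcons; change (delta Null) with (deltaN s l r f).
rewrite inE; apply/existsP; exists (cell Null n x i 0).
by rewrite shiftin_window IH ?(ltnW lt_in) // full_window eqxx.
Qed.

Lemma window_in_run_periodic n (x : n.-tuple S) i : i <= n ->
  (window Periodic n x 0, window Periodic n x i)
    \in run Periodic (take i (tau Periodic n x)).
Proof.
elim: i => [_|i IH lt_in]; first by rewrite take0 /Defs.run /= inE.
rewrite take_tauS // run_rcons; change (delta Periodic) with (deltaP s l r f).
rewrite inE; apply/existsP; exists (cell Periodic n x i 0).
by rewrite shiftin_window IH ?(ltnW lt_in) // full_window eqxx.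
Qed.

(* Cell n of a configuration is past the right end (null boundary), resp. equal
   to cell 0 (periodic boundary). *)
Lemma window_last_in_accept_null n (x : n.-tuple S) :
  window Null n x n \in accept s l r Null.
Proof.
rewrite inE; apply/forallP => j; apply/implyP => le_lj.
by rewrite tnth_mktuple /= ltnNge [n <= _](_ : _ = true) ?andbF //; lia.
Qed.

Lemma window_last_in_accept_periodic n (x : n.-tuple S) :
  (window Periodic n x 0, window Periodic n x n) \in accept s l r Periodic.
Proof.
rewrite inE /=; apply/eqP; apply: eq_from_tnth => j; rewrite !tnth_mktuple /=.
case: n x => [|n] x; first by rewrite !add0n.
have -> : n.+1 + j + n.+1 * l - l = n.+1 + (j + n.+1 * l - l) by lia.
by rewrite add0n modnDl.
Qed.

Lemma run_tau_meets_accept b n (x : n.-tuple S) :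
  run b (tau b n x) :&: accept s l r b != set0.
Proof.
have tau_take : tau b n x = take n (tau b n x) :> seq S
  by rewrite take_oversize ?size_tuple.
apply/set0Pn; case: b x tau_take => x tau_take.
- exists (window Null n x n); rewrite inE tau_take window_in_run_null //.
  exact: window_last_in_accept_null.
- exists (window Periodic n x 0, window Periodic n x n).
  rewrite inE tau_take window_in_run_periodic //.
  exact: window_last_in_accept_periodic.
Qed.

Lemma reversible_run_meets_accept b n w : reversible s l r f b n ->
  size w = n -> run b w :&: accept s l r b != set0.
Proof.
move=> [g _ gK] size_w; have /eqP size_w' := size_w.
have -> : w = Tuple size_w' by [].
by rewrite -(gK (Tuple size_w')) run_tau_meets_accept.
Qed.

End ReversibilityGraph.

Theorem corollary1 (s l r : nat) (f : (l + r).+1.-tuple 'I_s.+1 -> 'I_s.+1)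
  (b : bnd) (N : {set pt s l r b}) (k : nat) :
  0 < l + r ->
  is_vertex s l r f b N ->
  value_is s l r f b N k -> 1 <= k ->
  negative s l r b N ->
  has_loop s l r f b N ->
  forall n : nat, k <= n -> ~ reversible s l r f b n.
Proof.
move=> _ _ [[w [size_w run_w]] _] _ negN [c loopN] n le_kn rev_n.
have run_padded : run s l r f b (w ++ nseq (n - k) c) = N.
  by rewrite run_cat_loop run_w // loopN.
have size_padded : size (w ++ nseq (n - k) c) = n.
  by rewrite size_cat size_nseq size_w; lia.
have := reversible_run_meets_accept s l r f b n _ rev_n size_padded.
by rewrite run_padded negN eqxx.
Qed.
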